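(* Let $(A,\varphi,\phi_A,[\cdot,\cdot]_A,a_A,K,\langle\cdot,\cdot\rangle)$ be a para-Kähler hom-Lie algebroid, $\Omega(X,Y)=\langle(\phi_A\circ K)X,Y\rangle$, $\nabla$ the hom-Levi-Civita connection and $\nabla^a$ the connection determined by $\Omega(\nabla^{a}_XY,\phi_A(Z))=a_A(\phi_A(X))\Omega(Y,Z)-\Omega(\phi_A(Y),[X,Z]_A)$ for all $Z\in\Gamma(A)$. Then $\nabla_XY=\nabla^a_XY$ for all $X,Y\in\Gamma(A^1)$, and $\nabla_{\bar X}\bar Y=\nabla^a_{\bar X}\bar Y$ for all $\bar X,\bar Y\in\Gamma(A^{-1})$.
   Context: Standing conventions. $M$ is a smooth manifold, $\varphi:M\to M$ a diffeomorphism, $\varphi^*f=f\circ\varphi$. A hom-bundle $(A\to M,\varphi,\phi_A)$ is a vector bundle $A\to M$ together with an invertible $\mathbb R$-linear map $\phi_A:\Gamma(A)\to\Gamma(A)$ with $\phi_A(fX)=\varphi^*(f)\phi_A(X)$. $\varphi^!TM$ is the pullback bundle; its sections are identified with $\mathbb R$-linear maps $D:C^\infty(M)\to C^\infty(M)$ with $D(fg)=D(f)\varphi^*(g)+\varphi^*(f)D(g)$. A hom-Lie algebroid $(A,\varphi,\phi_A,[\cdot,\cdot]_A,a_A)$ consists of a hom-bundle, a skew-symmetric $\mathbb R$-bilinear bracket on $\Gamma(A)$ with $\phi_A[X,Y]_A=[\phi_A X,\phi_A Y]_A$ and $[\phi_A(X),[Y,Z]_A]_A+[\phi_A(Y),[Z,X]_A]_A+[\phi_A(Z),[X,Y]_A]_A=0$,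 and a bundle map $a_A:A\to\varphi^!TM$ such that $[X,fY]_A=\varphi^*(f)[X,Y]_A+a_A(\phi_A(X))(f)\phi_A(Y)$, $\varphi^*\circ a_A(X)=a_A(\phi_A(X))\circ\varphi^*$, and $a_A([X,Y]_A)\circ\varphi^*=a_A(\phi_AX)\circ a_A(Y)-a_A(\phi_AY)\circ a_A(X)$. Pseudo-Riemannian metric: a symmetric nondegenerate bilinear form $\langle\cdot,\cdot\rangle$ on $A$ with $\langle\phi_AX,\phi_AY\rangle=\varphi^*\langle X,Y\rangle$. The hom-Levi-Civita connection is the unique $\mathbb R$-bilinear $\nabla:\Gamma(A)\times\Gamma(A)\to\Gamma(A)$ with $\nabla_{fX}Y=\varphi^*(f)\nabla_XY$, $\nabla_X(fY)=\varphi^*(f)\nabla_XY+a_A(\phi_AX)(f)\phi_A(Y)$, $[X,Y]_A=\nabla_XY-\nabla_YX$, and $a_A(\phi_AX)\langle Y,Z\rangle=\langle\nabla_XY,\phi_AZ\rangle+\langle\phi_AY,\nabla_XZ\rangle$. An almost para-complex structure is an invertible map $K:\Gamma(A)\to\Gamma(A)$ with $(\phi_A\circ K)^2=\mathrm{Id}$, $\phi_A\circ K=K\circ\phi_A$, and such that $A^1=\ker(\phi_A\circ K-\mathrm{Id})$ and $A^{-1}=\ker(\phi_A\circ K+\mathrm{Id})$ have the same rank (so $A=A^1\oplus A^{-1}$). $(K,\langle\cdot,\cdot\rangle)$ is almost para-Hermitian if $\langle(\phi_A\circ K)X,(\phi_A\circ K)Y\rangle=-\langle X,Y\rangle$. A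 para-Kähler hom-Lie algebroid is an almost para-Hermitian hom-Lie algebroid with $\nabla_X\phi_A(KY)=\phi_A(K(\nabla_XY))$ for all $X,Y$, $\nabla$ the hom-Levi-Civita connection. *)

(* Algebraic model of a hom-Lie algebroid:
   F  ~ the real numbers (any real field),
   R  ~ C^oo(M) (a commutative F-algebra),
   V  ~ Gamma(A) (an R-module),
   s  ~ varphi^* (an F-algebra automorphism of R),
   phiA, br (bracket), anch (anchor; a section of varphi^! TM is identified
   with a varphi^*-derivation R -> R), g (metric), nabla, K. *)
From HB Require Import structures.
From mathcomp Require Import all_boot all_order all_algebra.
Set Implicit Arguments. Unset Strict Implicit. Unset Printing Implicit Defensive.
Import GRing.Theory Num.Theory.
Local Open Scope ring_scope.

Section HomLie.
Variables (F : realFieldType) (R : comAlgType F) (V : lmodType R).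

(* F-linearity ("R-linearity" in the paper) of maps on sections *)
Definition Flinear (f : V -> V) :=
  forall (c : F) (u v : V), f (c%:A *: u + v) = c%:A *: f u + f v.

Definition Fbilinear (b : V -> V -> V) :=
  (forall X, Flinear (b X)) /\ (forall Y, Flinear (fun X => b X Y)).

Definition base_automorphism (s : R -> R) :=
  [/\ bijective s, (forall x y, s (x + y) = s x + s y),
      (forall x y, s (x * y) = s x * s y), s 1 = 1
    & (forall (c : F) x, s (c *: x) = c *: s x)].

Definition phi_derivation (s : R -> R) (D : R -> R) :=
  (forall (c : F) x y, D (c *: x + y) = c *: D x + D y) /\
  (forall f h, D (f * h) = D f * s h + s f * D h).

Definition hom_bundle (s : R -> R) (phiA : V -> V) :=
  [/\ bijective phiA, Flinear phiA
    & forall (f : R) (X : V), phiA (f *: X) = s f *: phiA X].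

Definition hom_Lie_algebroid (s : R -> R) (phiA : V -> V)
    (br : V -> V -> V) (anch : V -> R -> R) :=
  base_automorphism s /\ hom_bundle s phiA /\
  (forall X Y, br X Y = - br Y X) /\ Fbilinear br /\
  (forall X Y, phiA (br X Y) = br (phiA X) (phiA Y)) /\
  (forall X Y Z, br (phiA X) (br Y Z) + br (phiA Y) (br Z X)
                 + br (phiA Z) (br X Y) = 0) /\
  (forall X, phi_derivation s (anch X)) /\
  (forall (f : R) X Y h, anch (f *: X + Y) h = f * anch X h + anch Y h) /\
  (forall X Y (f : R), br X (f *: Y) = s f *: br X Y + anch (phiA X) f *: phiA Y) /\
  (forall X f, s (anch X f) = anch (phiA X) (s f)) /\
  (forall X Y f, anch (br X Y) (s f)
                 = anch (phiA X) (anch Y f) - anch (phiA Y) (anch X f)).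

Definition pseudo_metric (s : R -> R) (phiA : V -> V) (g : V -> V -> R) :=
  [/\ (forall X Y, g X Y = g Y X),
      (forall (f : R) X Y Z, g (f *: X + Y) Z = f * g X Z + g Y Z),
      (forall W, (forall Z, g W Z = 0) -> W = 0)
    & (forall X Y, g (phiA X) (phiA Y) = s (g X Y))].

Definition hom_Levi_Civita (s : R -> R) (phiA : V -> V) (br : V -> V -> V)
    (anch : V -> R -> R) (g : V -> V -> R) (nabla : V -> V -> V) :=
  [/\ Fbilinear nabla,
      (forall (f : R) X Y, nabla (f *: X) Y = s f *: nabla X Y),
      (forall X (f : R) Y,
          nabla X (f *: Y) = s f *: nabla X Y + anch (phiA X) f *: phiA Y),
      (forall X Y, br X Y = nabla X Y - nabla Y X)
    & (forall X Y Z, anch (phiA X) (g Y Z)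
                     = g (nabla X Y) (phiA Z) + g (phiA Y) (nabla X Z))].

(* almost para-complex structure (without the equal-rank condition) *)
Definition almost_para_complex (phiA : V -> V) (K : V -> V) :=
  [/\ bijective K, (forall X, phiA (K (phiA (K X))) = X)
    & (forall X, phiA (K X) = K (phiA X))].

Definition almost_para_Hermitian (phiA : V -> V) (K : V -> V) (g : V -> V -> R) :=
  almost_para_complex phiA K /\
  (forall X Y, g (phiA (K X)) (phiA (K Y)) = - g X Y).

Definition para_Kahler (s : R -> R) (phiA : V -> V) (br : V -> V -> V)
    (anch : V -> R -> R) (K : V -> V) (g : V -> V -> R) (nabla : V -> V -> V) :=
  [/\ hom_Lie_algebroid s phiA br anch, pseudo_metric s phiA g,
      almost_para_Hermitian phiA K g, hom_Levi_Civita s phiA br anch g nabla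
    & (forall X Y, nabla X (phiA (K Y)) = phiA (K (nabla X Y)))].

Definition Omega (phiA : V -> V) (K : V -> V) (g : V -> V -> R) (X Y : V) : R :=
  g (phiA (K X)) Y.

Definition inA1 (phiA K : V -> V) (X : V) := phiA (K X) = X.
Definition inAm1 (phiA K : V -> V) (X : V) := phiA (K X) = - X.

End HomLie.

(* Metric compatibility and torsion-freeness of the hom-Levi-Civita connection,
   together with the parallelism of phi_A o K, give for all X, Y, Z
     a(phi X) Omega(Y, Z) - Omega(phi Y, [X, Z]) = Omega(nabla_X Y, phi Z) + Omega(phi Y, nabla_Z X).
   When X and Y both lie in A^1 (or both in A^{-1}), so do phi Y and nabla_Z X, and the last
   term vanishes because A^{+-1} is isotropic for the para-Hermitian metric.  Hence nabla_X Y and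
   nabla^a_X Y have the same Omega-pairing with every phi Z, and Omega is nondegenerate on the
   image of the bijection phi_A. *)
From Pilot Require Import Defs.
From HB Require Import structures.
From mathcomp Require Import all_boot all_order all_algebra.
Set Implicit Arguments. Unset Strict Implicit. Unset Printing Implicit Defensive.
Import GRing.Theory Num.Theory.
Local Open Scope ring_scope.

Lemma additiveN (U W : zmodType) (f : U -> W) :
  {morph f : u v / u + v} -> {morph f : u / - u}.
Proof.
move=> fD u; have f0 : f 0 = 0 by apply: (@addrI _ (f 0)); rewrite -fD !addr0.
by apply/eqP; rewrite -addr_eq0 -fD addNr f0.
Qed.

Lemma FlinearD (F : realFieldType) (R : comAlgType F) (V : lmodType R) (f : V -> V) :
  Flinear f -> {morph f : u v / u + v}.
Proof. by move=> fl u v; have := fl 1 u v; rewrite !scale1r. Qed.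

Lemma eqNr_eq0 (F : numFieldType) (W : lmodType F) (x : W) : x = - x -> x = 0.
Proof.
move=> xN; have x2 : x *+ 2 = 0 by rewrite mulr2n {1}xN addNr.
have : (2%:R : F)^-1 *: (x *+ 2) = 0 by rewrite x2 scaler0.
by rewrite -scaler_nat scalerA mulVf ?scale1r ?pnatr_eq0.
Qed.

Section ParaKahler.
Variables (F : realFieldType) (R : comAlgType F) (V : lmodType R).
Variables (s : R -> R) (phiA : V -> V) (br : V -> V -> V) (anch : V -> R -> R).
Variables (K : V -> V) (g : V -> V -> R) (nabla : V -> V -> V).
Hypothesis hPK : para_Kahler s phiA br anch K g nabla.

Local Notation Omega := (Omega phiA K g).
Local Notation inA1 := (inA1 phiA K).
Local Notation inAm1 := (inAm1 phiA K).

Lemma phiAN : {morph phiA : u / - u}.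
Proof.
by case: hPK => [[_ [[_ phiFl _] _]] _ _ _ _]; apply/additiveN/FlinearD/phiFl.
Qed.

Lemma phiA_surjective Z : exists Z', Z = phiA Z'.
Proof.
case: hPK => [[_ [[[phiV _ phiAK] _ _] _]] _ _ _ _].
by exists (phiV Z); rewrite phiAK.
Qed.

Lemma phiAKC X : phiA (K (phiA X)) = phiA (phiA (K X)).
Proof. by case: hPK => _ _ [[_ _ phiK] _] _ _; rewrite -phiK. Qed.

Lemma nablaN X : {morph nabla X : u / - u}.
Proof.
by case: hPK => _ _ _ [nablaFl _ _ _ _] _; apply/additiveN/FlinearD/nablaFl.1.
Qed.

Lemma metricDl Z : {morph g^~ Z : u v / u + v}.
Proof. by case: hPK => _ [_ gl _ _] _ _ _ u v /=; rewrite -(scale1r u) gl mul1r scale1r. Qed.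

Lemma metricNl Z : {morph g^~ Z : u / - u}.
Proof. exact/additiveN/metricDl. Qed.

Lemma metricDr Z : {morph g Z : u v / u + v}.
Proof.
by case: hPK => _ [gC _ _ _] _ _ _ u v; rewrite gC metricDl -!(gC Z).
Qed.

Lemma metricNr Z : {morph g Z : u / - u}.
Proof. exact/additiveN/metricDr. Qed.

Lemma Omega_phiA_inj n n' :
  (forall Z, Omega n (phiA Z) = Omega n' (phiA Z)) -> n = n'.
Proof.
case: hPK => _ [_ _ gnd _] [[_ phiKK _] _] _ _ eqOm.
have : phiA (K n) - phiA (K n') = 0.
  apply: gnd => Z; have [Z' ->] := phiA_surjective Z.
  by rewrite metricDl metricNl [g _ _]eqOm subrr.
by move/eqP; rewrite subr_eq0 => /eqP eqK; rewrite -(phiKK n) -(phiKK n') eqK.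
Qed.

Lemma Omega_nabla_bracket X Y Z :
  anch (phiA X) (Omega Y Z) - Omega (phiA Y) (br X Z)
  = Omega (nabla X Y) (phiA Z) + Omega (phiA Y) (nabla Z X).
Proof.
case: hPK => _ _ _ [_ _ _ brE compat] nablaK; rewrite /Omega.
by rewrite compat nablaK -phiAKC brE metricDr metricNr opprB addrCA addrK addrC.
Qed.

Lemma A1_isotropic U W : inA1 U -> inA1 W -> g U W = 0.
Proof.
case: hPK => _ _ [_ gK] _ _ hU hW.
by apply: eqNr_eq0; rewrite -gK hU hW.
Qed.

Lemma Am1_isotropic U W : inAm1 U -> inAm1 W -> g U W = 0.
Proof.
case: hPK => _ _ [_ gK] _ _ hU hW.
by apply: eqNr_eq0; rewrite -gK hU hW metricNl metricNr opprK.
Qed.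

Lemma phiA_A1 Y : inA1 Y -> inA1 (phiA Y).
Proof. by rewrite /Defs.inA1 phiAKC => ->. Qed.

Lemma phiA_Am1 Y : inAm1 Y -> inAm1 (phiA Y).
Proof. by rewrite /Defs.inAm1 phiAKC => ->; rewrite phiAN. Qed.

Lemma nabla_A1 Z X : inA1 X -> inA1 (nabla Z X).
Proof. by case: hPK => _ _ _ _ nablaK hX; rewrite /Defs.inA1 -nablaK hX. Qed.

Lemma nabla_Am1 Z X : inAm1 X -> inAm1 (nabla Z X).
Proof.
by case: hPK => _ _ _ _ nablaK hX; rewrite /Defs.inAm1 -nablaK hX nablaN.
Qed.

Lemma Omega_phiA_nabla_A1 X Y Z :
  inA1 X -> inA1 Y -> Omega (phiA Y) (nabla Z X) = 0.
Proof.
move=> hX hY; rewrite /Defs.Omega phiA_A1 //.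
by apply: A1_isotropic; [apply: phiA_A1 | apply: nabla_A1].
Qed.

Lemma Omega_phiA_nabla_Am1 X Y Z :
  inAm1 X -> inAm1 Y -> Omega (phiA Y) (nabla Z X) = 0.
Proof.
move=> hX hY; rewrite /Defs.Omega phiA_Am1 // metricNl.
by rewrite Am1_isotropic ?oppr0 //; [apply: phiA_Am1 | apply: nabla_Am1].
Qed.

Lemma nabla_eq_Omega_connection (nabla_a : V -> V -> V) X Y :
  (forall Z, Omega (nabla_a X Y) (phiA Z)
             = anch (phiA X) (Omega Y Z) - Omega (phiA Y) (br X Z)) ->
  (forall Z, Omega (phiA Y) (nabla Z X) = 0) ->
  nabla X Y = nabla_a X Y.
Proof.
move=> nabla_aE orth; apply: Omega_phiA_inj => Z.
by rewrite nabla_aE Omega_nabla_bracket orth addr0.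
Qed.

End ParaKahler.

Theorem mainTheorem6 (F : realFieldType) (R : comAlgType F) (V : lmodType R)
  (s : R -> R) (phiA : V -> V) (br : V -> V -> V) (anch : V -> R -> R)
  (K : V -> V) (g : V -> V -> R) (nabla nabla_a : V -> V -> V) :
  para_Kahler s phiA br anch K g nabla ->
  (forall X Y Z,
     Omega phiA K g (nabla_a X Y) (phiA Z)
     = anch (phiA X) (Omega phiA K g Y Z) - Omega phiA K g (phiA Y) (br X Z)) ->
  (forall X Y, inA1 phiA K X -> inA1 phiA K Y -> nabla X Y = nabla_a X Y) /\
  (forall X Y, inAm1 phiA K X -> inAm1 phiA K Y -> nabla X Y = nabla_a X Y).
Proof.
move=> hPK nabla_aE; split=> X Y hX hY;
  apply: (nabla_eq_Omega_connection hPK (nabla_aE X Y)) => Z.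
- exact: (Omega_phiA_nabla_A1 hPK _ hX hY).
- exact: (Omega_phiA_nabla_Am1 hPK _ hX hY).
Qed.
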